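(* Let $G$ be a graph having a component with at least two cycles, and let $F$ be a subgraph of $G$. The following are equivalent: (a1) $F=[G]$, the core of $G$; (a2) $F$ is the unique maximum (with respect to the subgraph relation) element among the subgraphs of $G$ that are cacti-graphs; (a3) letting $G'$ be the graph obtained from $G$ by removing all tree components, $F$ is the only subgraph of $G$ that is a cacti-graph and satisfies $\Delta F=\Delta G'$.
   Context: Graphs are finite, may have loops and parallel edges, and have no isolated vertices unless stated otherwise. A leaf is a vertex incident to exactly one edge, which is not a loop. $\Delta G=|E(G)|-|V(G)|$. For $X\subseteq E(G)$, $G\langle X\rangle$ is the subgraph with edge set $X$ and vertex set the vertices incident to edges of $X$. A cycle is a connected graph all of whose vertices have degree 2 (a loop contributes 2). A cacti-graph is a graph with no isolated vertices, no leaves, and no component that is a cycle. For a connected graph $A$ containing a cycle, its kernel $\lfloor A\rfloor$ is the subgraph obtained from $A$ by repeatedly deleting leaves (with their incident edges) until no leaf remains; equivalently $\lfloor A\rfloor=A\langle X\rangle$ where $X$ is the inclusion-minimum nonempty subset of $E(A)$ with $\Delta A\langle X\rangle=\Delta A$. If $G$ has a component with at least two cycles, the core $[G]$ of $G$ is the union of the kernels $\lfloor A\rfloor$ over the components $A$ of $G$ with $\Delta A\ge1$ (i.e. with at least two cycles). *)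

From HB Require Import structures.
From mathcomp Require Import all_boot all_order all_algebra.
Set Implicit Arguments. Unset Strict Implicit. Unset Printing Implicit Defensive.
Import Order.TTheory GRing.Theory Num.Theory.

(* A graph G is given by a finite vertex type V, a finite edge type E and an
   endpoint map ends : E -> V * V (the order of the pair is irrelevant;
   ends e = (v, v) is a loop).  A subgraph without isolated vertices is
   determined by its edge set X : {set E}; it is G<X>, whose vertex set is
   the set of vertices incident to edges of X. *)
Section Graph.
Variables (V E : finType) (ends : E -> V * V).

Definition inc (v : V) (e : E) : bool := ((ends e).1 == v) || ((ends e).2 == v).
Definition is_loop (e : E) : bool := (ends e).1 == (ends e).2.

Definition verts (X : {set E}) : {set V} := [set v | [exists e in X, inc v e]].

Definition Delta (X : {set E}) : int := (#|X|%:Z - #|verts X|%:Z)%R.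

(* degree in G<X>; a loop contributes 2 *)
Definition deg (X : {set E}) (v : V) : nat :=
  \sum_(e in X) (((ends e).1 == v) + ((ends e).2 == v)).

Definition adj (X : {set E}) : rel V :=
  fun u v => [exists e in X, (ends e == (u, v)) || (ends e == (v, u))].

Definition connectedb (X : {set E}) : bool :=
  (X != set0) && [forall u in verts X, forall v in verts X, connect (adj X) u v].

Definition is_cycle (X : {set E}) : bool :=
  connectedb X && [forall v in verts X, deg X v == 2].

Definition is_leaf (X : {set E}) (v : V) : bool :=
  (#|[set e in X | inc v e]| == 1) && [forall e in X, inc v e ==> ~~ is_loop e].

Definition is_component (X C : {set E}) : bool :=
  [&& C \subset X, connectedb C &
      [forall e in X, [exists v in verts C, inc v e] ==> (e \in C)]].

Definition two_cycles (A : {set E}) : bool :=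
  [exists C1 : {set E}, exists C2 : {set E},
     [&& C1 != C2, C1 \subset A, C2 \subset A, is_cycle C1 & is_cycle C2]].

Definition is_tree (A : {set E}) : bool :=
  connectedb A && [forall C : {set E}, (C \subset A) ==> ~~ is_cycle C].

(* cacti-graph: no isolated vertices (automatic for G<X>), no leaves,
   no component that is a cycle *)
Definition cacti (X : {set E}) : bool :=
  [forall v, ~~ is_leaf X v] &&
  [forall C : {set E}, is_component X C ==> ~~ is_cycle C].

Definition is_kernel (A K : {set E}) : bool :=
  [&& K != set0, K \subset A, Delta K == Delta A &
      [forall K' : {set E},
         [&& K' != set0, K' \subset A & Delta K' == Delta A] ==> (K \subset K')]].

Definition core : {set E} :=
  [set e | [exists A : {set E},
     [&& is_component setT A, (1 <= Delta A)%R &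
         [exists K : {set E}, is_kernel A K && (e \in K)]]]].

Definition nontree_part : {set E} :=
  [set e | [exists A : {set E},
     [&& is_component setT A, ~~ is_tree A & e \in A]]].

End Graph.

(* Everything is driven by [Delta X = |X| - |verts X|]. It is supermodular,
   additive over vertex-disjoint edge sets, and monotone on the nonempty
   subgraphs of a connected graph, since an edge meeting [X] adds at most one
   vertex. Hence the nonempty subgraphs of a component [A] with
   [Delta = Delta A] are closed under intersection, so the kernel exists; by
   minimality it has neither a leaf nor a cycle component, and the core is a
   cacti-graph. Conversely, a component [C] of a cacti-graph is connected, has
   minimum degree 2 and is not a cycle, so [Delta C >= 1]. If [K] is the kernel
   of the component of the whole graph containing [C], supermodularity gives
   [Delta (K :&: C) >= Delta C], whereas in a graph of minimum degree 2 every
   edge added to a subgraph it meets strictly raises [Delta]; so [C \subset K],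
   and the core is the maximum cacti subgraph. Tree components have negative
   [Delta] and unicyclic ones [Delta = 0], so the core and [nontree_part] have
   the same [Delta]. Finally a cacti subgraph [H] of the core with the same
   [Delta] is the whole core, since a component of the core missed or only
   partly covered by [H] would make [Delta H] smaller. *)

From Pilot Require Import Defs.
From HB Require Import structures.
From mathcomp Require Import all_boot all_order all_algebra.
From mathcomp Require Import zify.
Import Order.TTheory GRing.Theory Num.Theory.

Section Cores.
Set Implicit Arguments. Unset Strict Implicit. Unset Printing Implicit Defensive.

Variables (V E : finType) (ends : E -> V * V).
Local Notation inc := (inc ends).
Local Notation verts := (verts ends).
Local Notation Delta := (Delta ends).
Local Notation deg := (deg ends).
Local Notation adj := (adj ends).
Local Notation is_leaf := (is_leaf ends).
Local Notation is_cycle := (is_cycle ends).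
Local Notation connectedb := (connectedb ends).
Local Notation is_component := (is_component ends).
Local Notation is_kernel := (is_kernel ends).
Local Notation cacti := (cacti ends).
Local Notation core := (core ends).
Local Notation nontree_part := (nontree_part ends).
Implicit Types (X Y Z A C H K : {set E}) (u v w : V) (e f : E).

(** * Vertex sets and [Delta] *)

Lemma vertsP v X : reflect (exists2 e, e \in X & inc v e) (v \in verts X).
Proof. by rewrite inE; apply: (iffP exists_inP) => -[e]; exists e. Qed.

Lemma inc_ends1 e : inc (ends e).1 e. Proof. by rewrite /Defs.inc eqxx. Qed.
Lemma inc_ends2 e : inc (ends e).2 e. Proof. by rewrite /Defs.inc eqxx orbT. Qed.

Lemma ends1_verts e X : e \in X -> (ends e).1 \in verts X.
Proof. by move=> eX; apply/vertsP; exists e; rewrite ?inc_ends1. Qed.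

Lemma verts_subset X Y : X \subset Y -> verts X \subset verts Y.
Proof.
move=> /subsetP sXY; apply/subsetP => v /vertsP[e /sXY eY ve].
by apply/vertsP; exists e.
Qed.

Lemma vertsU X Y : verts (X :|: Y) = verts X :|: verts Y.
Proof.
apply/setP => v; apply/vertsP/setUP => [[e /setUP[] eXY ve]|].
- by left; apply/vertsP; exists e.
- by right; apply/vertsP; exists e.
by case=> /vertsP[e eXY ve]; exists e; rewrite // inE eXY ?orbT.
Qed.

Lemma verts0 : verts set0 = set0.
Proof. by apply/setP => v; rewrite in_set0; apply/negbTE/negP => /vertsP[e]; rewrite inE. Qed.

Lemma verts_set1 e : verts [set e] = [set (ends e).1; (ends e).2].
Proof.
apply/setP => v; apply/vertsP/set2P => [[f /set1P-> /orP[]/eqP->]|]; [by left|by right|].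
by case=> ->; exists e; rewrite ?set11 ?inc_ends1 ?inc_ends2.
Qed.

Lemma Delta0 : Delta set0 = 0%R.
Proof. by rewrite /Defs.Delta verts0 !cards0. Qed.

Lemma Delta_gt0_neq0 X : (0 < Delta X)%R -> X != set0.
Proof. by apply: contraTneq => ->; rewrite Delta0 ltxx. Qed.

Lemma Delta_supermod X Y : (Delta X + Delta Y <= Delta (X :|: Y) + Delta (X :&: Y))%R.
Proof.
have := cardsUI X Y; have := cardsUI (verts X) (verts Y).
have : (#|verts (X :&: Y)| <= #|verts X :&: verts Y|)%N.
  by apply/subset_leq_card; rewrite subsetI !verts_subset ?subsetIl ?subsetIr.
rewrite /Defs.Delta vertsU; lia.
Qed.

Lemma disjoint_verts_setI0 X Y : [disjoint verts X & verts Y] -> X :&: Y = set0.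
Proof.
move=> dXY; apply/setP => e; rewrite !inE; apply/negbTE/andP => -[eX eY].
move: dXY => /disjoint_setI0/setP/(_ (ends e).1).
by rewrite in_setI in_set0 (ends1_verts eX) (ends1_verts eY).
Qed.

Lemma DeltaU_disjoint X Y :
  [disjoint verts X & verts Y] -> Delta (X :|: Y) = (Delta X + Delta Y)%R.
Proof.
move=> dXY; have := cardsUI X Y; have := cardsUI (verts X) (verts Y).
rewrite (disjoint_verts_setI0 dXY) (disjoint_setI0 dXY) !cards0 /Defs.Delta vertsU; lia.
Qed.

Lemma Delta_bigcup_seq (I : finType) (r : seq I) (F : I -> {set E}) : uniq r ->
  {in r &, forall i j, i != j -> [disjoint verts (F i) & verts (F j)]} ->
  Delta (\bigcup_(i <- r) F i) = (\sum_(i <- r) Delta (F i))%R.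
Proof.
elim: r => [|i r IHr]; first by rewrite !big_nil Delta0.
case/andP=> ir ur dF; have dFr : {in r &, forall j k, j != k ->
    [disjoint verts (F j) & verts (F k)]}.
  by move=> j k jr kr; apply: dF; rewrite inE ?jr ?kr orbT.
rewrite !big_cons DeltaU_disjoint ?IHr // (big_morph verts vertsU verts0).
rewrite bigcup_seq; apply/bigcup_disjoint => j jr.
by apply: dF; rewrite ?mem_head ?inE ?jr ?orbT //; apply: contraNneq ir => ->.
Qed.

Lemma Delta_bigcup (I : finType) (P : pred I) (F : I -> {set E}) :
  {in P &, forall i j, i != j -> [disjoint verts (F i) & verts (F j)]} ->
  Delta (\bigcup_(i | P i) F i) = (\sum_(i | P i) Delta (F i))%R.
Proof.
move=> dF; rewrite -big_filter -[RHS]big_filter.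
apply: Delta_bigcup_seq; first exact/filter_uniq/index_enum_uniq.
by move=> i j; rewrite !mem_filter => /andP[Pi _] /andP[Pj _]; apply: dF.
Qed.

(** * Degrees *)

Definition endmult e v : nat := ((ends e).1 == v) + ((ends e).2 == v).

Lemma degE X v : deg X v = (\sum_(e in X) endmult e v)%N. Proof. by []. Qed.

Lemma endmult_eq0 e v : ~~ inc v e -> endmult e v = 0%N.
Proof. by rewrite /endmult /Defs.inc negb_or => /andP[/negbTE-> /negbTE->]. Qed.

Lemma endmult_gt0 e v : inc v e -> (0 < endmult e v)%N.
Proof. by case/orP=> /eqP<-; rewrite /endmult eqxx ?leq_addr ?leq_addl. Qed.

Lemma endmult_loop e v : inc v e -> is_loop ends e -> endmult e v = 2%N.
Proof. by rewrite /endmult /Defs.inc /is_loop => /orP[]/eqP<- /eqP->; rewrite eqxx. Qed.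

Lemma sum_deg X : (\sum_v deg X v = 2 * #|X|)%N.
Proof.
rewrite exchange_big /= -sum1_card big_distrr /=; apply: eq_bigr => e _.
have sum_eq a : (\sum_v (a == v) = 1)%N.
  by rewrite (bigD1 a) //= eqxx big1 // => v /negbTE; rewrite eq_sym => ->.
by rewrite big_split /= !sum_eq.
Qed.

Lemma deg_eq0 X v : v \notin verts X -> deg X v = 0%N.
Proof.
move=> vX; rewrite degE big1 // => e eX; apply/endmult_eq0/negP => ve.
by case/negP: vX; apply/vertsP; exists e.
Qed.

Lemma sum_deg_verts X : (\sum_(v in verts X) deg X v = 2 * #|X|)%N.
Proof.
rewrite -sum_deg [RHS](bigID (mem (verts X))) /= [X in (_ + X)%N]big1 ?addn0 //.
by move=> v /deg_eq0.
Qed.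

Lemma endmult_le_deg X e v : e \in X -> (endmult e v <= deg X v)%N.
Proof. by move=> eX; rewrite degE (bigD1 e) //= leq_addr. Qed.

Lemma card_inc_le_deg X v : (#|[set e in X | inc v e]| <= deg X v)%N.
Proof.
rewrite degE -sum1_card big_mkcond [X in (_ <= X)%N]big_mkcond /=.
apply: leq_sum => e _; rewrite inE; case: (e \in X) => //=.
by case/boolP: (inc v e) => // /endmult_gt0.
Qed.

Lemma deg_gt0 X v : v \in verts X -> (0 < deg X v)%N.
Proof.
by case/vertsP=> e eX /endmult_gt0/leq_trans; apply; apply: endmult_le_deg.
Qed.

Lemma leafless_deg2 X v : ~~ is_leaf X v -> v \in verts X -> (2 <= deg X v)%N.
Proof.
move=> vNleaf vX; rewrite leqNgt; apply: contra vNleaf => deg_lt2.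
apply/andP; split.
  rewrite eqn_leq -ltnS (leq_ltn_trans (card_inc_le_deg X v)) //=.
  by case/vertsP: vX => e eX ve; rewrite card_gt0; apply/set0Pn; exists e; rewrite inE eX.
apply/forall_inP => e eX; apply/implyP => ve; apply: contraL deg_lt2 => loop_e.
by rewrite -leqNgt -(endmult_loop ve loop_e) endmult_le_deg.
Qed.

Lemma deg_setD X Y v : X \subset Y -> v \notin verts X -> deg Y v = deg (Y :\: X) v.
Proof.
move=> sXY vX; rewrite !degE (bigID (mem X)) /= big1 ?add0n.
  by apply: eq_bigl => e; rewrite !inE andbC.
by move=> e /andP[_ eX]; apply/endmult_eq0; apply: contra vX => ve; apply/vertsP; exists e.
Qed.

(* Count the ends of the edges of [Y :\: X]: each vertex of [verts Y] outside
   [verts X] carries at least 2 of them. *)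
Lemma Delta_subset_deg2 X Y : X \subset Y -> {in verts Y, forall v, 2 <= deg Y v}%N ->
  (2 * Delta X + (\sum_(v in verts X) deg (Y :\: X) v)%N%:Z <= 2 * Delta Y)%R.
Proof.
move=> sXY deg2; set W := verts Y :\: verts X.
have count_ends : (2 * #|W| + \sum_(v in verts X) deg (Y :\: X) v <= 2 * #|Y :\: X|)%N.
  rewrite -sum_deg [X in (_ <= X)%N](bigID (mem W)) /=; apply: leq_add.
    rewrite -sum1_card big_distrr /= muln1; apply: leq_sum => v.
    by rewrite inE => /andP[vNX vY]; rewrite -deg_setD // deg2.
  rewrite [X in (_ <= X)%N](bigID (mem (verts X))) /=; apply/leq_trans/leq_addr.
  by apply/eq_leq/eq_bigl => v; rewrite in_setD; case: (v \in verts X); rewrite /= ?andbF.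
have := cardsD Y X; rewrite (setIidPr sXY); have := subset_leq_card sXY.
have := cardsD (verts Y) (verts X); rewrite (setIidPr (verts_subset sXY)).
have := subset_leq_card (verts_subset sXY); rewrite -/W /Defs.Delta; lia.
Qed.

Lemma le_Delta_deg2 X Y : X \subset Y -> {in verts Y, forall v, 2 <= deg Y v}%N ->
  (Delta X <= Delta Y)%R.
Proof. by move=> sXY /(Delta_subset_deg2 sXY); lia. Qed.

Lemma lt_Delta_deg2 X Y d v : X \subset Y -> {in verts Y, forall v, 2 <= deg Y v}%N ->
  d \in Y :\: X -> v \in verts X -> inc v d -> (Delta X < Delta Y)%R.
Proof.
move=> sXY /(Delta_subset_deg2 sXY) + dYX vX vd.
have : (0 < \sum_(w in verts X) deg (Y :\: X) w)%N.
  by rewrite (bigD1 v) //= ltn_addr // deg_gt0 //; apply/vertsP; exists d.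
lia.
Qed.

(** * Connectivity and components *)

Lemma adjP X u v :
  reflect (exists2 e, e \in X & (ends e == (u, v)) || (ends e == (v, u))) (adj X u v).
Proof. by apply: (iffP exists_inP) => -[e]; exists e. Qed.

Lemma adj_sym X : symmetric (adj X).
Proof. by move=> u v; apply/adjP/adjP => -[e eX uv]; exists e; rewrite // orbC. Qed.

Lemma connect_adj_sym X : connect_sym (adj X).
Proof. exact/sym_connect_sym/adj_sym. Qed.

Lemma adj_inc X u v : adj X u v -> exists2 e, e \in X & inc u e && inc v e.
Proof.
by case/adjP=> e eX /orP[]/eqP ends_e; exists e; rewrite // /Defs.inc ends_e !eqxx ?orbT.
Qed.

Lemma connect_inc X e v : e \in X -> inc v e -> connect (adj X) (ends e).1 v.
Proof.
move=> eX /orP[]/eqP<-; first exact: connect0.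
by apply/connect1/adjP; exists e; rewrite // -surjective_pairing eqxx.
Qed.

Lemma connect_adj_subset X Y u v :
  X \subset Y -> connect (adj X) u v -> connect (adj Y) u v.
Proof.
move=> /subsetP sXY; apply: connect_sub => x y /adjP[e /sXY eY xy].
by apply/connect1/adjP; exists e.
Qed.

Definition closed_in X C := forall f v, f \in X -> v \in verts C -> inc v f -> f \in C.

Lemma connect_closed_verts X C u v :
  closed_in X C -> connect (adj X) u v -> u \in verts C -> v \in verts C.
Proof.
move=> closedC uv; suff clC : closed (adj X) (verts C) by rewrite -(closed_connect clC uv).
apply: (intro_closed (connect_adj_sym X)) => x y /adj_inc[f fX /andP[xf yf]] xC.
by apply/vertsP; exists f; first exact: closedC xC xf.
Qed.

Lemma connectedP X : connectedb X ->
  X != set0 /\ {in verts X &, forall u v, connect (adj X) u v}.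
Proof.
case/andP=> X0 /forall_inP connX; split=> // u v uX vX.
by have /forall_inP := connX u uX; apply.
Qed.

Lemma exists_edge_leaving A X : connectedb A -> X \subset A -> X != set0 -> X != A ->
  exists2 d, d \in A :\: X & exists2 v, v \in verts X & inc v d.
Proof.
move=> /connectedP[_ connA] sXA /set0Pn[e eX] XnA.
have [f fAX] : exists f, f \in A :\: X.
  by apply/set0Pn; rewrite setD_eq0; apply: contra XnA => sAX; rewrite eqEsubset sXA.
case: (boolP [exists d in A :\: X, [exists v in verts X, inc v d]]).
  by case/exists_inP=> d dAX /exists_inP[v vX vd]; exists d => //; exists v.
rewrite negb_exists_in => /forall_inP noleave.
have closedX : closed_in A X.
  move=> g w gA wX wg; apply: contraT => gNX.
  have /negP[] : ~~ [exists v in verts X, inc v g] by apply: noleave; rewrite inE gNX.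
  by apply/exists_inP; exists w.
move: fAX; rewrite inE => /andP[fNX fA]; case/negP: fNX.
apply: (closedX _ _ fA _ (inc_ends1 f)).
apply: connect_closed_verts closedX _ (ends1_verts eX).
by apply: connA; apply: ends1_verts; rewrite ?fA ?(subsetP sXA).
Qed.

Lemma Delta_setU1 X d v :
  d \notin X -> v \in verts X -> inc v d -> (Delta X <= Delta (d |: X))%R.
Proof.
move=> dNX vX vd; have : (0 < #|verts [set d] :&: verts X|)%N.
  rewrite card_gt0; apply/set0Pn; exists v; rewrite in_setI vX andbT.
  by apply/vertsP; exists d; rewrite ?set11.
have : (#|verts [set d]| <= 2)%N by rewrite verts_set1 cards2; case: (_ != _).
have := cardsUI (verts [set d]) (verts X).
rewrite /Defs.Delta cardsU1 dNX vertsU; lia.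
Qed.

Lemma Delta_le_connected A X : connectedb A -> X \subset A -> X != set0 ->
  (Delta X <= Delta A)%R.
Proof.
move=> connA; move Xn : #|A :\: X| => n.
elim: n X Xn => [|n IH] X Xn sXA X0; have [<-//|XnA] := eqVneq X A.
  move/eqP: Xn; rewrite cards_eq0 setD_eq0 => sAX.
  by case/eqP: XnA; apply/eqP; rewrite eqEsubset sXA.
have [d dAX [v vX vd]] := exists_edge_leaving connA sXA X0 XnA.
move: (dAX); rewrite inE => /andP[dNX dA].
apply: le_trans (Delta_setU1 dNX vX vd) (IH _ _ _ _).
- have -> : A :\: (d |: X) = (A :\: X) :\ d by apply/setP => x; rewrite !inE negb_or andbA.
  by move: Xn; rewrite (cardsD1 d) dAX => -[].
- by rewrite subUset sub1set dA.
- by apply/set0Pn; exists d; rewrite setU11.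
Qed.

Lemma componentP X C : is_component X C ->
  [/\ C \subset X, connectedb C & closed_in X C].
Proof.
case/and3P=> sCX connC /forall_inP closedC; split=> // f v fX vC vf.
by apply: (implyP (closedC f fX)); apply/exists_inP; exists v.
Qed.

Lemma closed_in_disjoint X C : closed_in X C -> [disjoint verts (X :&: C) & verts (X :\: C)].
Proof.
move=> closedC; rewrite -setI_eq0; apply/eqP/setP => w; rewrite in_setI in_set0.
apply/negbTE/andP => -[/(subsetP (verts_subset (subsetIr X C))) wC /vertsP[f]].
by rewrite inE => /andP[/negP fNC fX] wf; apply/fNC/(closedC f w).
Qed.

Lemma component_disjoint_setD X C : is_component X C ->
  [disjoint verts C & verts (X :\: C)].
Proof.
by case/componentP=> sCX _ /closed_in_disjoint; rewrite (setIidPr sCX).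
Qed.

Definition comp X e := [set f in X | connect (adj X) (ends e).1 (ends f).1].

Lemma mem_comp X e : e \in X -> e \in comp X e.
Proof. by move=> eX; rewrite inE eX connect0. Qed.

Lemma comp_subset X e : comp X e \subset X.
Proof. by apply/subsetP => f; rewrite inE => /andP[]. Qed.

Lemma connect_comp_verts X e v : v \in verts (comp X e) -> connect (adj X) (ends e).1 v.
Proof.
by case/vertsP=> f; rewrite inE => /andP[fX ef] vf; apply: connect_trans ef (connect_inc fX vf).
Qed.

Lemma comp_component X e : e \in X -> is_component X (comp X e).
Proof.
move=> eX; set C := comp X e.
have connC v : connect (adj X) (ends e).1 v -> connect (adj C) (ends e).1 v.
  case/connectP=> p + ->; elim/last_ind: p => [|p y IHp] //=.
  rewrite rcons_path last_rcons => /andP[/IHp ex_C xy]; set x := last _ p in ex_C xy *.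
  have ex_X := connect_adj_subset (comp_subset X e) ex_C.
  case/adjP: (xy) => g gX ends_g; have gC : g \in C.
    rewrite inE gX; case/orP: ends_g => /eqP-> /=; first exact: ex_X.
    exact: connect_trans ex_X (connect1 xy).
  by apply: connect_trans ex_C (connect1 _); apply/adjP; exists g.
apply/and3P; split; first exact: comp_subset.
  apply/andP; split; first by apply/set0Pn; exists e; apply: mem_comp.
  apply/forall_inP => u uC; apply/forall_inP => v vC.
  rewrite (connect_trans _ (connC _ (connect_comp_verts vC))) //.
  by rewrite connect_adj_sym; apply/connC/connect_comp_verts.
apply/forall_inP => f fX; apply/implyP => /exists_inP[v vC vf].
by rewrite inE fX (connect_trans (connect_comp_verts vC)) // connect_adj_sym connect_inc.
Qed.

Lemma component_comp X A e : is_component X A -> e \in A -> A = comp X e.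
Proof.
move=> compA eA; case/componentP: compA => sAX /connectedP[_ connA] closedA.
apply/setP => f; rewrite inE; apply/idP/andP => [fA|[fX ef]].
  split; first exact: (subsetP sAX).
  by apply: connect_adj_subset sAX _; apply: connA; apply: ends1_verts.
apply: (closedA f _ fX _ (inc_ends1 f)).
exact: connect_closed_verts closedA ef (ends1_verts eA).
Qed.

Lemma components_disjoint X A B : is_component X A -> is_component X B -> A != B ->
  [disjoint verts A & verts B].
Proof.
move=> compA compB; apply: contraR; rewrite -setI_eq0 => /set0Pn[w].
rewrite in_setI => /andP[wA /vertsP[f fB wf]].
have [sBX _ _] := componentP compB; have [_ _ closedA] := componentP compA.
have fA := closedA f w (subsetP sBX f fB) wA wf.
by rewrite (component_comp compA fA) (component_comp compB fB).
Qed.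

Lemma component_leafless X C : (forall v, ~~ is_leaf X v) -> is_component X C ->
  forall v, ~~ is_leaf C v.
Proof.
move=> leaflessX /componentP[sCX _ closedC] v; apply: contra (leaflessX v).
case/andP=> /cards1P[e Ce] /forall_inP noloop.
have [eC ve] : e \in C /\ inc v e by move/setP: Ce => /(_ e); rewrite !inE eqxx => /andP.
have vC : v \in verts C by apply/vertsP; exists e.
have incXC : [set f in X | inc v f] = [set f in C | inc v f].
  apply/setP => f; rewrite !inE; apply/andP/andP => -[fXC vf]; split=> //.
  - exact: closedC vC vf.
  - exact: (subsetP sCX).
apply/andP; split; first by rewrite incXC Ce cards1.
apply/forall_inP => f fX; apply/implyP => vf.
by have := noloop f (closedC f v fX vC vf); rewrite vf.
Qed.

Lemma is_leaf_subset X Y v e :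
  X \subset Y -> e \in X -> inc v e -> is_leaf Y v -> is_leaf X v.
Proof.
move=> sXY eX ve /andP[/cards1P[f Yf] noloop]; apply/andP; split.
  have ef : e = f by apply/set1P; rewrite -Yf inE (subsetP sXY e eX) ve.
  apply/cards1P; exists f; apply/setP => g; rewrite inE.
  apply/idP/set1P => [/andP[gX vg]|->]; last by rewrite -ef eX ve.
  by apply/set1P; rewrite -Yf inE (subsetP sXY g gX) vg.
by apply/forall_inP => g gX; apply: (forall_inP noloop); apply: (subsetP sXY).
Qed.

(** * Cycles *)

Lemma deg2_excess X : {in verts X, forall v, 2 <= deg X v}%N ->
  (2 * #|verts X| + \sum_(v in verts X) (deg X v - 2) = 2 * #|X|)%N.
Proof.
move=> deg2; rewrite -sum_deg_verts.
rewrite [RHS](eq_bigr (fun v => 2 + (deg X v - 2)))%N; last by move=> v /deg2/subnKC.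
by rewrite big_split /= sum_nat_const mulnC.
Qed.

Lemma Delta_ge0_deg2 X : {in verts X, forall v, 2 <= deg X v}%N -> (0 <= Delta X)%R.
Proof. by move/deg2_excess; rewrite /Defs.Delta; lia. Qed.

Lemma Delta_eq0_deg2 X : {in verts X, forall v, 2 <= deg X v}%N -> Delta X = 0%R ->
  {in verts X, forall v, deg X v = 2%N}.
Proof.
move=> deg2 DX0 v vX; have : (\sum_(w in verts X) (deg X w - 2) == 0)%N.
  by apply/eqP; move: (deg2_excess deg2) DX0; rewrite /Defs.Delta; lia.
by rewrite sum_nat_eq0 => /forall_inP/(_ v vX)/eqP; have := deg2 v vX; lia.
Qed.

Lemma cycle_deg2 C : is_cycle C -> {in verts C, forall v, deg C v = 2%N}.
Proof. by case/andP=> _ /forall_inP deg2 v /deg2/eqP. Qed.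

Lemma cycle_Delta C : is_cycle C -> Delta C = 0%R.
Proof.
move/cycle_deg2 => deg2; have := deg2_excess (fun v vC => eq_leq (esym (deg2 v vC))).
rewrite big1 => [|v /deg2->//]; rewrite /Defs.Delta; lia.
Qed.

Lemma Delta_ge1_leafless C : connectedb C -> (forall v, ~~ is_leaf C v) -> ~~ is_cycle C ->
  (1 <= Delta C)%R.
Proof.
move=> connC leafless notcycle.
have deg2 : {in verts C, forall v, 2 <= deg C v}%N by move=> v; apply: leafless_deg2.
have [DC0|] := eqVneq (Delta C) 0%R; last by have := Delta_ge0_deg2 deg2; lia.
case/negP: notcycle; apply/andP; split=> //.
by apply/forall_inP => v vC; rewrite (Delta_eq0_deg2 deg2 DC0).
Qed.

Lemma loop_cycle e : is_loop ends e -> is_cycle [set e].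
Proof.
move=> /eqP loop_e; have vertsE : verts [set e] = [set (ends e).1].
  by rewrite verts_set1 loop_e setUid.
apply/andP; split; last first.
  apply/forall_inP => v; rewrite vertsE => /set1P->.
  by rewrite degE big_set1 /endmult loop_e eqxx.
apply/andP; split; first by apply/set0Pn; exists e; rewrite set11.
by apply/forall_inP => u; rewrite vertsE => /set1P->; apply/forall_inP => v /set1P->.
Qed.

Lemma critical_connected Z : Z != set0 -> (0 <= Delta Z)%R ->
  (forall Y, Y \proper Z -> Y != set0 -> (Delta Y < 0)%R) -> connectedb Z.
Proof.
move=> /set0Pn[e eZ] DZ critical; set C := comp Z e.
have compC : is_component Z C := comp_component eZ.
have [CZ|CnZ] := eqVneq C Z; first by rewrite -CZ; case/and3P: compC.
have eC : e \in C := mem_comp eZ.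
have sCZ : C \subset Z := comp_subset Z e.
have splitZ : C :|: (Z :\: C) = Z by rewrite -{1}(setIidPr sCZ) setID.
have DC : (Delta C < 0)%R.
  by apply: critical; [rewrite properEneq CnZ sCZ | apply/set0Pn; exists e].
have DZC : (Delta (Z :\: C) < 0)%R.
  apply: critical; last by rewrite setD_eq0; apply: contra CnZ => sZC; rewrite eqEsubset sCZ.
  by rewrite properE subsetDl; apply/subsetPn; exists e; rewrite ?in_setD ?eC.
have : (Delta Z < 0)%R.
  by rewrite -{1}splitZ (DeltaU_disjoint (component_disjoint_setD compC)); lia.
by rewrite ltNge DZ.
Qed.

Lemma critical_cycle Z : Z != set0 -> (0 <= Delta Z)%R ->
  (forall Y, Y \proper Z -> Y != set0 -> (Delta Y < 0)%R) -> is_cycle Z.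
Proof.
move=> Z0 DZ critical; case: (boolP (#|Z| == 1%N)) => [/cards1P[e Ze]|Zn1].
  move: DZ; rewrite Ze /Defs.Delta verts_set1 cards1 cards2 => DZ; apply: loop_cycle.
  by rewrite /is_loop; case: eqVneq => // ends_ne; move: DZ; rewrite ends_ne; lia.
have DZe e : e \in Z -> Z :\ e != set0 /\ (Delta (Z :\ e) < 0)%R.
  move=> eZ; have Ze0 : Z :\ e != set0.
    by apply: contraNneq Zn1 => Ze0; rewrite (cardsD1 e Z) eZ Ze0 cards0.
  by split=> //; apply: critical Ze0; apply: properD1.
have vertsZe e : e \in Z -> verts (Z :\ e) = verts Z.
  move=> eZ; apply/eqP; rewrite eqEcard verts_subset ?subD1set //=; rewrite leqNgt.
  apply/negP => lt_verts; have [_] := DZe e eZ; move: DZ lt_verts.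
  by rewrite /Defs.Delta (cardsD1 e Z) eZ; lia.
have deg2 : {in verts Z, forall v, 2 <= deg Z v}%N.
  move=> v vZ; have /vertsP[e eZ ve] := vZ.
  move: vZ; rewrite -(vertsZe e eZ) => /vertsP[f /setD1P[fe fZ] vf].
  apply: leq_trans (card_inc_le_deg Z v); apply: leq_trans (_ : #|[set e; f]| <= _)%N.
    by rewrite cards2 eq_sym fe.
  by apply/subset_leq_card/subsetP => g /set2P[]->; rewrite inE ?eZ ?fZ.
have DZ0 : Delta Z = 0%R.
  have [e eZ] := set0Pn _ Z0; have [_] := DZe e eZ; move: DZ.
  by rewrite /Defs.Delta vertsZe // (cardsD1 e Z) eZ; lia.
apply/andP; split; first exact: critical_connected.
by apply/forall_inP => v vZ; rewrite (Delta_eq0_deg2 deg2 DZ0).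
Qed.

Lemma cycle_exists X : X != set0 -> (0 <= Delta X)%R ->
  exists2 C : {set E}, C \subset X & is_cycle C.
Proof.
move=> X0 DX; pose P Z := (Z != set0) && (0 <= Delta Z)%R.
have PX : P X by rewrite /P X0.
have [Z /minsetP[/andP[Z0 DZ] minZ] sZX] := minset_exists PX.
exists Z => //; apply: critical_cycle => // Y /andP[sYZ ZnY] Y0; rewrite ltNge.
by apply: contra ZnY => DY; rewrite (minZ Y) // /P Y0.
Qed.

(** * Kernels *)

Definition kernel_candidate A K := [&& K != set0, K \subset A & Delta K == Delta A].

Lemma kernelP A K : reflect
  (kernel_candidate A K /\ forall K', kernel_candidate A K' -> K \subset K')
  (is_kernel A K).
Proof.
apply: (iffP and4P) => [[K0 sKA DK /forallP minK]|[/and3P[K0 sKA DK] minK]].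
  by split=> [|K' candK']; [apply/and3P | apply: (implyP (minK K'))].
by split=> //; apply/forallP => K'; apply/implyP/minK.
Qed.

Section KernelOfConnected.
Variable A : {set E}.
Hypotheses (connA : connectedb A) (DA : (1 <= Delta A)%R).

Lemma kernel_candidate_setI K1 K2 :
  kernel_candidate A K1 -> kernel_candidate A K2 -> kernel_candidate A (K1 :&: K2).
Proof.
move=> /and3P[K10 sK1A /eqP DK1] /and3P[K20 sK2A /eqP DK2].
have sK12A : K1 :&: K2 \subset A by rewrite subIset ?sK1A.
have DU : (Delta (K1 :|: K2) <= Delta A)%R.
  by apply: Delta_le_connected; rewrite ?subUset ?sK1A // setU_eq0 negb_and K10.
have DI : (Delta A <= Delta (K1 :&: K2))%R by move: (Delta_supermod K1 K2) DU; lia.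
apply/and3P; split=> //; first by apply: Delta_gt0_neq0; apply: lt_le_trans DI.
by rewrite eq_le DI Delta_le_connected // Delta_gt0_neq0 // (lt_le_trans _ DI).
Qed.

Lemma kernel_exists : exists K, is_kernel A K.
Proof.
have candA : kernel_candidate A A.
  by rewrite /kernel_candidate subxx eqxx Delta_gt0_neq0 // (lt_le_trans _ DA).
have [K /minsetP[candK minK] _] := minset_exists candA.
exists K; apply/kernelP; split=> // K' candK'.
by rewrite -(minK _ (kernel_candidate_setI candK candK')) ?subsetIl ?subsetIr.
Qed.

Lemma kernel_minimal K K' : is_kernel A K -> K' \subset K -> (Delta A <= Delta K')%R ->
  K' = K.
Proof.
case/kernelP=> /and3P[_ sKA _] minK sK'K DK'; apply/eqP; rewrite eqEsubset sK'K minK //.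
have sK'A := subset_trans sK'K sKA; have K'0 : K' != set0.
  by apply: Delta_gt0_neq0; apply: lt_le_trans DK'.
by rewrite /kernel_candidate K'0 sK'A eq_le DK' Delta_le_connected.
Qed.

Lemma kernel_leafless K v : is_kernel A K -> ~~ is_leaf K v.
Proof.
move=> kerK; apply/negP => /andP[/cards1P[e Ke] _].
have [eK ve] : e \in K /\ inc v e by move/setP: Ke => /(_ e); rewrite !inE eqxx => /andP.
have vNKe : v \notin verts (K :\ e).
  apply/negP => /vertsP[f /setD1P[fe fK] vf].
  by move/setP: Ke => /(_ f); rewrite !inE fK vf (negbTE fe).
have vertsKe : verts (K :\ e) \proper verts K.
  rewrite properE verts_subset ?subD1set //=; apply/subsetPn; exists v => //.
  by apply/vertsP; exists e.
have DKe : (Delta A <= Delta (K :\ e))%R.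
  have /kernelP[/and3P[_ _ /eqP <-] _] := kerK; move: (proper_card vertsKe).
  by rewrite /Defs.Delta (cardsD1 e K) eK; lia.
by have := kernel_minimal kerK (subD1set K e) DKe => /setP/(_ e); rewrite setD11 eK.
Qed.

(* Inside a kernel, a cycle that is closed would contribute [Delta = 0], so
   dropping it keeps [Delta] while shrinking the kernel. *)
Lemma kernel_closed_cycle K C : is_kernel A K -> is_cycle C -> closed_in K C ->
  K :&: C = set0.
Proof.
move=> kerK cycC closedC; have DKC : (Delta (K :&: C) <= 0)%R.
  rewrite -(cycle_Delta cycC) le_Delta_deg2 ?subsetIr // => v vC.
  by rewrite (cycle_deg2 cycC vC).
have DKD : (Delta A <= Delta (K :\: C))%R.
  have /kernelP[/and3P[_ _ /eqP <-] _] := kerK.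
  by rewrite -{1}(setID K C) (DeltaU_disjoint (closed_in_disjoint closedC)); lia.
move/setP: (kernel_minimal kerK (subsetDl K C) DKD) => KC; apply/setP => f.
by have := KC f; rewrite !inE; case: (f \in C); case: (f \in K).
Qed.

End KernelOfConnected.

(* Supermodularity gives [Delta C <= Delta (K :&: C)], while an edge of [C]
   leaving [K :&: C] would make this inequality strict. *)
Lemma connected_deg2_subset_kernel A K C : connectedb A -> is_kernel A K ->
  C \subset A -> connectedb C ->
  {in verts C, forall v, 2 <= deg C v}%N -> (1 <= Delta C)%R -> C \subset K.
Proof.
move=> connA /kernelP[/and3P[K0 sKA /eqP DK] _] sCA connC deg2 DC.
have DU : (Delta (K :|: C) <= Delta A)%R.
  by apply: Delta_le_connected; rewrite ?subUset ?sKA // setU_eq0 negb_and K0.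
have DI : (Delta C <= Delta (K :&: C))%R by move: (Delta_supermod K C) DU; rewrite DK; lia.
have KC0 : K :&: C != set0.
  by apply: Delta_gt0_neq0; apply: lt_le_trans DI; apply: lt_le_trans DC.
have [KCC|KCnC] := eqVneq (K :&: C) C; first by rewrite -KCC subsetIl.
have [d dC [v vKC vd]] := exists_edge_leaving connC (subsetIr K C) KC0 KCnC.
by have := lt_Delta_deg2 (subsetIr K C) deg2 dC vKC vd; rewrite ltNge DI.
Qed.

Lemma kernel_uniq A K1 K2 : is_kernel A K1 -> is_kernel A K2 -> K1 = K2.
Proof.
move=> /kernelP[cand1 min1] /kernelP[cand2 min2].
by apply/eqP; rewrite eqEsubset min1 // min2.
Qed.

Definition kern A := odflt set0 [pick K | is_kernel A K].

Lemma kernP A : connectedb A -> (1 <= Delta A)%R -> is_kernel A (kern A).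
Proof.
move=> connA DA; rewrite /kern; case: pickP => [K //|noker].
by have [K kerK] := kernel_exists connA DA; move: (noker K); rewrite kerK.
Qed.

Lemma kern_subset A : connectedb A -> (1 <= Delta A)%R -> kern A \subset A.
Proof. by move=> connA /(kernP connA)/kernelP[/and3P[]]. Qed.

Lemma Delta_kern A : connectedb A -> (1 <= Delta A)%R -> Delta (kern A) = Delta A.
Proof. by move=> connA /(kernP connA)/kernelP[/and3P[_ _ /eqP]]. Qed.

(** * The core *)

Lemma coreE :
  core = \bigcup_(A | is_component setT A && (1 <= Delta A)%R) kern A.
Proof.
apply/setP => e; rewrite inE; apply/existsP/bigcupP => -[A].
  case/and3P=> compA DA /existsP[K /andP[kerK eK]]; exists A; rewrite ?compA //.
  by case/componentP: compA => _ connA _; rewrite -(kernel_uniq kerK (kernP connA DA)).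
case/andP=> compA DA eK; exists A; rewrite compA DA /=; apply/existsP; exists (kern A).
by case/componentP: compA => _ connA _; rewrite eK kernP.
Qed.

Lemma kern_subset_core A : is_component setT A -> (1 <= Delta A)%R -> kern A \subset core.
Proof. by move=> compA DA; rewrite coreE; apply: bigcup_sup; rewrite compA. Qed.

Lemma cacti_component_Delta X C : cacti X -> is_component X C -> (1 <= Delta C)%R.
Proof.
case/andP=> /forallP leafless /forall_inP noncycle compC.
apply: Delta_ge1_leafless; first by case/componentP: compC.
  exact: component_leafless compC.
exact: noncycle.
Qed.

Lemma core_cacti : cacti core.
Proof.
apply/andP; split.
  apply/forallP => v; apply/negP => leafv; have /andP[/cards1P[e coree] _] := leafv.
  have [ecore ve] : e \in core /\ inc v e.
    by move/setP: coree => /(_ e); rewrite !inE eqxx => /andP.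
  move: ecore; rewrite coreE => /bigcupP[A /andP[compA DA] eK].
  have [_ connA _] := componentP compA.
  have /negP[] := kernel_leafless connA DA v (kernP connA DA).
  exact: is_leaf_subset (kern_subset_core compA DA) eK ve leafv.
apply/forall_inP => C compC; apply/negP => cycC.
have [sCcore /connectedP[/set0Pn[e eC] _] closedC] := componentP compC.
move: (subsetP sCcore e eC); rewrite coreE => /bigcupP[A /andP[compA DA] eK].
have [_ connA _] := componentP compA.
have closedKC : closed_in (kern A) C.
  by move=> f w fK; apply: closedC; apply: (subsetP (kern_subset_core compA DA)).
have := kernel_closed_cycle connA DA (kernP connA DA) cycC closedKC.
by move/setP/(_ e); rewrite in_setI eK eC in_set0.
Qed.

Lemma cacti_subset_core H : cacti H -> H \subset core.
Proof.
move=> cactiH; apply/subsetP => h hH; set C := comp H h; set A := comp setT h.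
have compC : is_component H C := comp_component hH.
have compA : is_component setT A := comp_component (in_setT h).
have [_ connC _] := componentP compC; have [_ connA _] := componentP compA.
have sCA : C \subset A.
  apply/subsetP => f; rewrite !inE => /andP[_ hf].
  by apply: connect_adj_subset hf; apply: subsetT.
have DC := cacti_component_Delta cactiH compC.
have C0 : C != set0 by apply/set0Pn; exists h; apply: mem_comp.
have DA : (1 <= Delta A)%R := le_trans DC (Delta_le_connected connA sCA C0).
have deg2 : {in verts C, forall v, 2 <= deg C v}%N.
  move=> v; apply/leafless_deg2/(component_leafless _ compC).
  by case/andP: cactiH => /forallP.
have sCK := connected_deg2_subset_kernel connA (kernP connA DA) sCA connC deg2 DC.
exact: subsetP (subset_trans sCK (kern_subset_core compA DA)) h (mem_comp hH).
Qed.

Lemma is_tree_Delta A : connectedb A -> is_tree ends A = (Delta A < 0)%R.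
Proof.
move=> connA; have [A0 _] := connectedP connA.
rewrite /is_tree connA /=; apply/forall_inP/idP => [nocycle|DA C sCA].
  rewrite ltNge; apply/negP => /(cycle_exists A0)[C sCA cycC].
  by have := nocycle C sCA; rewrite cycC.
apply/negP => cycC; have C0 : C != set0 by case/andP: cycC => /andP[].
by have := Delta_le_connected connA sCA C0; rewrite (cycle_Delta cycC) leNgt DA.
Qed.

Lemma nontree_partE :
  nontree_part = \bigcup_(A | is_component setT A && (0 <= Delta A)%R) A.
Proof.
apply/setP => e; rewrite inE; apply/existsP/bigcupP => -[A].
  case/and3P=> compA ntA eA; exists A => //; rewrite compA /=.
  by case/componentP: compA => _ connA _; rewrite leNgt -(is_tree_Delta connA).
case/andP=> compA DA eA; exists A; rewrite compA eA andbT /=.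
by case/componentP: compA => _ connA _; rewrite is_tree_Delta // -leNgt.
Qed.

(* Components with [Delta A >= 1] contribute [Delta (kern A) = Delta A] to the
   left, components with [Delta A = 0] contribute [0] to the right. *)
Lemma Delta_core : Delta core = Delta nontree_part.
Proof.
have disj_kern : {in [pred A | is_component setT A && (1 <= Delta A)%R] &,
    forall A B, A != B -> [disjoint verts (kern A) & verts (kern B)]}.
  move=> A B /andP[compA DA] /andP[compB DB] AnB.
  have [[_ connA _] [_ connB _]] := (componentP compA, componentP compB).
  by apply: disjointW (components_disjoint compA compB AnB); apply/verts_subset/kern_subset.
have disj_comp : {in [pred A | is_component setT A && (0 <= Delta A)%R] &,
    forall A B, A != B -> [disjoint verts A & verts B]}.
  by move=> A B /andP[compA _] /andP[compB _]; apply: components_disjoint compA compB.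
rewrite coreE nontree_partE (Delta_bigcup disj_kern) (Delta_bigcup disj_comp).
rewrite big_mkcond [RHS]big_mkcond; apply: eq_bigr => A _ /=.
have [compA|//] := boolP (is_component setT A); have [_ connA _] := componentP compA.
have [DA|DA] /= := boolP (1 <= Delta A)%R.
  by rewrite Delta_kern // ifT // (le_trans _ DA).
by case: ifP => // D0; move: DA; lia.
Qed.

Lemma Delta_eq_cacti_subset X H : cacti X -> H \subset X -> Delta H = Delta X -> H = X.
Proof.
move=> cactiX sHX DHX; apply/eqP; rewrite eqEsubset sHX; apply/subsetP => d dX.
apply: contraT => dNH; have deg2 : {in verts X, forall v, 2 <= deg X v}%N.
  by case/andP: cactiX => /forallP leafless _ v; apply: leafless_deg2.
set C := comp X d; have compC : is_component X C := comp_component dX.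
have [sCX connC _] := componentP compC.
have [CH0|CHn0] := eqVneq (C :&: H) set0.
  have disjCH : [disjoint verts C & verts H].
    apply: (disjointWr _ (component_disjoint_setD compC)); apply: verts_subset.
    apply/subsetP => f fH; rewrite in_setD (subsetP sHX f fH) andbT.
    by apply: contraTN fH => fC; move/setP: CH0 => /(_ f); rewrite in_setI fC in_set0 /= => ->.
  have := le_Delta_deg2 (_ : C :|: H \subset X) deg2; rewrite subUset sHX sCX.
  rewrite (DeltaU_disjoint disjCH) DHX => /(_ isT).
  by have := cacti_component_Delta cactiX compC; lia.
have CHnC : C :&: H != C.
  by apply: contraNneq dNH => CHC; move: (mem_comp dX); rewrite -/C -CHC => /setIP[].
have [g gC [v vCH vg]] := exists_edge_leaving connC (subsetIl C H) CHn0 CHnC.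
have gXH : g \in X :\: H.
  move: gC; rewrite !in_setD in_setI => /andP[gNCH gC].
  by rewrite (subsetP sCX g gC) andbT; rewrite gC in gNCH.
have := lt_Delta_deg2 sHX deg2 gXH (subsetP (verts_subset (subsetIr C H)) v vCH) vg.
by rewrite DHX ltxx.
Qed.

End Cores.

Theorem mainTheorem6 (V E : finType) (ends : E -> V * V)
  (no_isolated : forall v : V, exists e : E, inc ends v e)
  (hG : exists A : {set E}, is_component ends setT A && two_cycles ends A)
  (F : {set E}) :
  (F = core ends <->
     (cacti ends F /\ forall H : {set E}, cacti ends H -> H \subset F)) /\
  (F = core ends <->
     (cacti ends F /\ Delta ends F = Delta ends (nontree_part ends) /\
      forall H : {set E}, cacti ends H ->
        Delta ends H = Delta ends (nontree_part ends) -> H = F)).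
Proof.
split; split.
- by move=> ->; split; [exact: core_cacti | exact: cacti_subset_core].
- by case=> cactiF maxF; apply/eqP; rewrite eqEsubset cacti_subset_core ?maxF ?core_cacti.
- move=> ->; split; first exact: core_cacti.
  split=> [|H cactiH]; first exact: Delta_core.
  rewrite -Delta_core; apply: Delta_eq_cacti_subset; first exact: core_cacti.
  exact: cacti_subset_core.
- by case=> cactiF [DF uniqF]; apply/esym/uniqF; [exact: core_cacti | exact: Delta_core].
Qed.
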